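(* Let $\mathbf{x}=(x_n)$ be a summable nonincreasing sequence of positive reals such that $\mathcal{A}(\mathbf{x})$ is neither a Cantor set nor a finite set, and suppose $x_k=x_{k+1}$ for some $k\in\mathbb{N}$. Then there is $x\in\mathcal{A}(\mathbf{x})$ with $f_{\mathbf{x}}(x)\ge 4$ (where the infinite values $\omega,\mathfrak{c}$ count as $\ge 4$).
   Context: For a summable sequence $\mathbf{x}=(x_n)$ of positive reals, the achievement set is $\mathcal{A}(\mathbf{x})=\{\sum_{n\in A}x_n : A\subseteq\mathbb{N}\}$, and the cardinal function $f_{\mathbf{x}}:\mathcal{A}(\mathbf{x})\to\{1,2,3,\dots\}\cup\{\omega,\mathfrak{c}\}$ sends $x$ to the cardinality of the set of $(\varepsilon_n)\in\{0,1\}^{\mathbb{N}}$ with $\sum\varepsilon_n x_n=x$. *)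

From HB Require Import structures.
From mathcomp Require Import all_boot all_order all_algebra.
From mathcomp Require Import all_classical all_reals all_analysis.
Set Implicit Arguments. Unset Strict Implicit. Unset Printing Implicit Defensive.
Import Order.TTheory GRing.Theory Num.Theory.
Import numFieldNormedType.Exports.
Local Open Scope classical_set_scope.
Local Open Scope ring_scope.

(* sum_{n in A} x_n, where A is encoded by its indicator eps : nat -> bool *)
Definition subsum (R : realType) (x : R^nat) (eps : nat -> bool) : R :=
  limn (series (fun n => if eps n then x n else 0)).

Definition achievement_set (R : realType) (x : R^nat) : set R :=
  [set y | exists eps : nat -> bool, subsum x eps = y].

(* the set of (eps_n) in {0,1}^N with sum eps_n x_n = y; f_x(y) is its cardinality *)
Definition representations (R : realType) (x : R^nat) (y : R) : set (nat -> bool) :=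
  [set eps | subsum x eps = y].

Definition is_cantor_set (R : realType) (A : set R) : Prop :=
  [/\ A !=set0, compact A, perfect_set A & interior (closure A) = set0].

From HB Require Import structures.
From mathcomp Require Import all_boot all_order all_algebra.
From mathcomp Require Import all_classical all_reals all_analysis.
From mathcomp Require Import lra.
Import Order.TTheory GRing.Theory Num.Theory.
Import numFieldNormedType.Exports.
Local Open Scope classical_set_scope.
Local Open Scope ring_scope.
Set Implicit Arguments. Unset Strict Implicit. Unset Printing Implicit Defensive.

(* Proof idea.  [A(x)] is the image of Cantor space under the continuous map
   [e |-> sum_n e_n x_n], hence compact, and it is perfect because toggling bit
   [n] moves a sum by exactly [x n], which tends to [0].  Not being a Cantor
   set, [A(x)] therefore has nonempty interior.  Every subsum differs by [0], [x k] or
   [2 x k] from a subsum over some [e] vanishing at [k] and [k+1]; these three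
   translates are closed and cover a nonempty open set, so one of them has
   interior and contains an interval.  The subsum map is not
   injective on a closed set of sequences whose image contains an interval, so
   two distinct [e1], [e2] vanishing at [k] and [k+1] have the same sum [y];
   setting bit [k] or bit [k+1] in either one gives four distinct
   representations of [y + x k]. *)

Lemma interior_setU_closed (T : topologicalType) (C D : set T) :
  closed C -> (C `|` D)° !=set0 -> C° !=set0 \/ D° !=set0.
Proof.
move=> cC [t CDt].
have oCD : open (C `|` D)° := @open_interior _ _.
have [CDC|/existsNP[s /not_implyP[CDs nCs]]] := pselect ((C `|` D)° `<=` C).
  by left; exists t; apply: (interiorS CDC); rewrite (interior_id _).1.
have VD : (C `|` D)° `&` ~` C `<=` D by move=> r [/interior_subset[]].
right; exists s; apply: (interiorS VD).
by rewrite (interior_id _).1 //; apply: openI => //; exact: closed_openC.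
Qed.

Lemma interior_itv_subset (R : realFieldType) (A : set R) :
  A° !=set0 -> exists u v, u < v /\ [set` `[u, v]] `<=` A.
Proof.
move=> [y /nbhs_ballP[eps /= eps_gt0 yA]].
exists (y - eps / 2), (y + eps / 2); split; first lra.
move=> t; rewrite /= in_itv /= => /andP[ty yt]; apply: yA.
by rewrite -ball_normE /= ltr_norml; apply/andP; split; lra.
Qed.

Lemma perfect_set_cvg (T : topologicalType) (A : set T) : closed A ->
  (forall a, A a -> exists2 u : nat -> T,
     (forall n, A (u n) /\ u n != a) & u @ \oo --> a) ->
  perfect_set A.
Proof.
move=> cA approx; split => //; apply/seteqP; split => [t /subset_limit_point|a Aa U aU].
  by rewrite -(closure_id A).1.
have [u uA ua] := approx a Aa.
have [N _ uU] : \forall n \near \oo, U (u n) := ua _ aU.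
by have [uNA uNa] := uA N; exists (u N); split => //; exact: uU (leqnn N).
Qed.

Definition cylinder (e : cantor_space) (n : nat) : set cantor_space :=
  [set e' | forall i, (i < n)%N -> e' i = e i].

Lemma clopen_bit (i : nat) (b : bool) : clopen [set e : cantor_space | e i = b].
Proof.
have bit_cont : continuous (fun e : cantor_space => e i).
  exact: (@proj_continuous nat (fun _ => bool) i).
split; first exact: (continuousP _).1 bit_cont [set b] (discrete_open _).
apply: (continuous_closedP _).1 bit_cont [set b] _.
by rewrite -[X in closed X]setCK closedC; exact: discrete_open.
Qed.

Lemma clopen_cylinder (e : cantor_space) (n : nat) : clopen (cylinder e n).
Proof.
elim: n => [|n IHn].
  have -> : cylinder e 0 = setT by apply/seteqP; split.
  by split; [exact: openT | exact: closedT].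
have -> : cylinder e n.+1 = cylinder e n `&` [set e' | e' n = e n].
  apply/seteqP; split => e' /=.
    by move=> ee'; split; [move=> i /ltnW; exact: ee' | exact: ee'].
  by move=> [ee' e'n] i; rewrite ltnS leq_eqVlt => /predU1P[->|/ee'].
exact: clopenI IHn (clopen_bit _ _).
Qed.

Lemma nbhs_cylinder (e : cantor_space) (n : nat) : nbhs e (cylinder e n).
Proof. by apply: open_nbhs_nbhs; split => //; exact: (clopen_cylinder e n).1. Qed.

Definition vanishing_at (j l : nat) : set cantor_space :=
  [set e | e j = false /\ e l = false].

Lemma closed_vanishing_at (j l : nat) : closed (vanishing_at j l).
Proof. exact: closedI (clopen_bit j false).2 (clopen_bit l false).2. Qed.

Definition masked (V : nmodType) (x : V^nat) (e : nat -> bool) : V^nat :=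
  fun n => if e n then x n else 0.

Section bits.
Variable I : eqType.
Implicit Types (e : I -> bool) (j l : I).

Definition setbit e j : I -> bool := fun i => (i == j) || e i.

Definition clrbit e j : I -> bool := fun i => (i != j) && e i.

Lemma setbit_clrbit e j : e j -> setbit (clrbit e j) j = e.
Proof. by move=> ej; apply/funext => i; rewrite /setbit /clrbit; case: eqP => [->|]. Qed.

Lemma clrbit_id e j : e j = false -> clrbit e j = e.
Proof. by move=> ej; apply/funext => i; rewrite /clrbit; case: eqP => [->|]. Qed.

Lemma setbit_inj e e' j : e j = false -> e' j = false ->
  setbit e j = setbit e' j -> e = e'.
Proof.
move=> ej e'j ee'; apply/funext => i; have := congr1 (fun f => f i) ee'.
by rewrite /setbit; case: (i =P j) => [->|]; rewrite ?ej ?e'j.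
Qed.

Lemma setbit_neq e e' j l : j != l -> e' j = false ->
  setbit e j <> setbit e' l.
Proof. by move=> jl e'j /(congr1 (fun f => f j)); rewrite /setbit eqxx (negbTE jl) e'j. Qed.

End bits.

Section subsum.
Variables (R : realType) (x : R^nat).
Hypotheses (xpos : forall n, 0 < x n) (xsum : cvgn (series x)).

Lemma subsumE e : subsum x e = limn (series (masked x e)).
Proof. by []. Qed.

Lemma masked_ge0 e n : 0 <= masked x e n.
Proof. by rewrite /masked; case: (e n) => //; exact/ltW. Qed.

Lemma masked_le e n : masked x e n <= x n.
Proof. by rewrite /masked; case: (e n) => //; exact/ltW. Qed.

Lemma is_cvg_masked e : cvgn (series (masked x e)).
Proof.
apply: series_le_cvg xsum => n; [exact: masked_ge0 | exact/ltW | exact: masked_le].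
Qed.

Lemma series_masked_le_subsum e n : series (masked x e) n <= subsum x e.
Proof.
rewrite subsumE; apply: nondecreasing_cvgn_le; last exact: is_cvg_masked.
by apply: nondecreasing_series => m _ _; exact: masked_ge0.
Qed.

Definition tail_sum n := limn (series x) - series x n.

Lemma tail_sum_lt eps : 0 < eps -> exists n, tail_sum n < eps.
Proof.
move=> eps_gt0; have /cvgrPdist_lt/(_ eps eps_gt0)[N _ /(_ N (leqnn N)) xN] := xsum.
by exists N; exact: le_lt_trans (ler_norm _) xN.
Qed.

Lemma subsum_le_series_masked_tail e n :
  subsum x e <= series (masked x e) n + tail_sum n.
Proof.
rewrite subsumE; apply: limr_le; first exact: is_cvg_masked.
near=> N; have nN : (n <= N)%N by near: N; exists n.
have tail_le : series (masked x e) N - series (masked x e) n <= series x N - series x n.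
  by rewrite !sub_series_geq //; apply: ler_sum => i _; exact: masked_le.
have xN : series x N <= limn (series x).
  apply: nondecreasing_cvgn_le; last exact: xsum.
  by apply: nondecreasing_series => m _ _; exact/ltW.
rewrite /tail_sum; lra.
Unshelve. all: end_near.
Qed.

Lemma dist_subsum_cylinder (e e' : cantor_space) n : cylinder e n e' ->
  `|subsum x e - subsum x e'| <= tail_sum n.
Proof.
move=> ee'; have eq_series : series (masked x e') n = series (masked x e) n.
  by apply: eq_big_nat => i /andP[_ /ee' ei]; rewrite /masked ei.
have := series_masked_le_subsum e n; have := series_masked_le_subsum e' n.
have := subsum_le_series_masked_tail e n; have := subsum_le_series_masked_tail e' n.
by rewrite eq_series ler_norml => *; apply/andP; split; lra.
Qed.

Lemma subsumU (e1 e2 : nat -> bool) : (forall i, ~~ (e1 i && e2 i)) ->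
  subsum x (fun i => e1 i || e2 i) = subsum x e1 + subsum x e2.
Proof.
move=> e12; rewrite !subsumE -lim_seriesD; try exact: is_cvg_masked.
congr (limn (series _)); apply/funext => i; rewrite /masked fctE.
by have := e12 i; case: (e1 i); case: (e2 i); rewrite ?addr0 ?add0r.
Qed.

Lemma subsum_pred1 j : subsum x (pred1 j) = x j.
Proof.
rewrite subsumE; apply: cvg_lim => //; apply: cvg_near_cst.
near=> n; rewrite /series /= -big_mkcond big_nat1_eq /=.
by have -> : (j < n)%N by near: n; exists j.+1.
Unshelve. all: end_near.
Qed.

Lemma subsum_setbit e j : e j = false -> subsum x (setbit e j) = subsum x e + x j.
Proof.
move=> ej; rewrite (subsumU (e1 := pred1 j)) ?subsum_pred1 1?addrC //.
by move=> i /=; case: eqP => [->|]; rewrite ?ej.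
Qed.

Lemma subsum_clrbit e j : subsum x e = subsum x (clrbit e j) + (if e j then x j else 0).
Proof.
case ej: (e j); last by rewrite clrbit_id ?addr0.
by rewrite -subsum_setbit ?setbit_clrbit // /clrbit eqxx.
Qed.

Lemma continuous_subsum : continuous (subsum x : cantor_space -> R).
Proof.
move=> e; apply/cvgrPdist_le => eps eps_gt0; have [n tail_n] := tail_sum_lt eps_gt0.
apply: filterS (nbhs_cylinder e n) => e' ee'.
exact: le_trans (dist_subsum_cylinder ee') (ltW tail_n).
Qed.

Lemma closed_image_subsum (K : set cantor_space) : closed K -> closed (subsum x @` K).
Proof.
move=> cK; apply: compact_closed; first exact: Rhausdorff.
apply: continuous_compact; first exact/continuous_subspaceT/continuous_subsum.
exact: (subclosed_compact cK cantor_space_compact).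
Qed.

Lemma achievement_setE : achievement_set x = subsum x @` [set: cantor_space].
Proof. by apply/seteqP; split => y [e]; [exists e | move=> _; exists e]. Qed.

Lemma compact_achievement_set : compact (achievement_set x).
Proof.
rewrite achievement_setE; apply: continuous_compact cantor_space_compact.
exact/continuous_subspaceT/continuous_subsum.
Qed.

Lemma perfect_achievement_set : perfect_set (achievement_set x).
Proof.
apply: perfect_set_cvg => [|_ [e <-]].
  by rewrite achievement_setE; apply: closed_image_subsum; exact: closedT.
pose toggle n := if e n then clrbit e n else setbit e n.
have dist_toggle n : `|subsum x e - subsum x (toggle n)| = x n.
  rewrite /toggle (subsum_clrbit e n); case en: (e n); last first.
    by rewrite clrbit_id // subsum_setbit // addr0 opprD addrA subrr sub0r normrN gtr0_norm.
  by rewrite addrC addKr gtr0_norm.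
exists (fun n => subsum x (toggle n)).
  move=> n; split; first by exists (toggle n).
  apply/eqP => eq_n; have := dist_toggle n.
  by rewrite eq_n subrr normr0 => /esym/eqP; rewrite gt_eqF.
apply/cvgrPdist_lt => eps eps_gt0.
have /cvgrPdist_lt/(_ eps eps_gt0) := cvg_series_cvg_0 xsum.
by apply: filterS => n; rewrite sub0r normrN dist_toggle gtr0_norm.
Qed.

Lemma achievement_set_interior_neq0 :
  ~ is_cantor_set (achievement_set x) -> (achievement_set x)° !=set0.
Proof.
move=> notcantor; apply: contrapT => no_int; apply: notcantor; split.
- by exists (subsum x (fun=> false)), (fun=> false).
- exact: compact_achievement_set.
- exact: perfect_achievement_set.
- rewrite -(closure_id _).1; last exact: perfect_achievement_set.1.
  by apply/seteqP; split => // t At; apply: no_int; exists t.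
Qed.

(* If [subsum x] were injective on [K], the clopen cylinder around a preimage
   [e0] of [u] would split [[u, v]] into two disjoint closed pieces, so one of
   them would cover [[u, v]]: not the cylinder's image, whose diameter is at
   most [tail_sum n < v - u], and not the other one, which misses [u]. *)
Lemma subsum_collision (K : set cantor_space) (u v : R) : closed K -> u < v ->
  [set` `[u, v]] `<=` subsum x @` K ->
  exists e1 e2, [/\ K e1, K e2, e1 <> e2 & subsum x e1 = subsum x e2].
Proof.
move=> cK uv uvK; apply: contrapT => no_collision.
have inj e1 e2 : K e1 -> K e2 -> subsum x e1 = subsum x e2 -> e1 = e2.
  by move=> Ke1 Ke2 e12; apply: contrapT => ne; apply: no_collision; exists e1, e2.
have uuv : [set` `[u, v]] u by rewrite /= in_itv /= lexx ltW.
have vuv : [set` `[u, v]] v by rewrite /= in_itv /= lexx ltW.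
have [e0 Ke0 e0u] := uvK u uuv.
have [n tail_n] : exists n, tail_sum n < v - u by apply: tail_sum_lt; rewrite subr_gt0.
have [oC cC] := clopen_cylinder e0 n.
pose P := subsum x @` (K `&` cylinder e0 n).
pose Q := subsum x @` (K `&` ~` cylinder e0 n).
have cP : closed P by apply: closed_image_subsum; exact: closedI.
have cQ : closed Q by apply: closed_image_subsum; apply: closedI; rewrite ?closedC.
have sepPQ : separated P Q.
  rewrite /separated -(closure_id P).1 // -(closure_id Q).1 //.
  suff -> : P `&` Q = set0 by [].
  apply/seteqP; split => // _ [[e1 [Ke1 C1] <-] [e2 [Ke2 nC2] e21]].
  by apply: nC2; rewrite (inj _ _ Ke2 Ke1 e21).
have coverPQ : [set` `[u, v]] `<=` P `|` Q.
  move=> t /uvK[e Ke <-]; have [Ce|nCe] := pselect (cylinder e0 n e).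
    by left; exists e.
  by right; exists e.
have [uvP|uvQ] := connected_subset sepPQ coverPQ (@segment_connected _ u v).
- have [e [_ Ce] ev] := uvP v vuv.
  have := dist_subsum_cylinder Ce; rewrite ev e0u distrC gtr0_norm ?subr_gt0 //.
  by move=> /(lt_le_trans tail_n); rewrite ltxx.
- have [e [Ke nCe] eu] := uvQ u uuv.
  by apply: nCe; rewrite -(inj _ _ Ke0 Ke) ?eu.
Qed.

Section equal_terms.
Variables (j l : nat).
Hypotheses (jl : j != l) (xjl : x j = x l).

Let shifted (c : R) : set R := [set y | (subsum x @` vanishing_at j l) (y - c)].

Lemma achievement_set_sub_shifted :
  achievement_set x `<=` shifted 0 `|` (shifted (x j) `|` shifted (x j + x j)).
Proof.
move=> _ [e <-]; pose e0 := clrbit (clrbit e l) j.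
have e0_off : vanishing_at j l e0 by rewrite /vanishing_at /e0 /clrbit /= !eqxx !andbF.
have ej : clrbit e l j = e j by rewrite /clrbit (negbTE jl).
have := subsum_clrbit (clrbit e l) j; rewrite ej -/e0 => sum_e0.
have := subsum_clrbit e l; rewrite sum_e0 -xjl => sum_e.
rewrite /shifted /=; case: (e j) sum_e; case: (e l) => sum_e;
  [right; right | right; left | right; left | left];
  by exists e0 => //; lra.
Qed.

Lemma itv_subset_subsum_vanishing_at : (achievement_set x)° !=set0 ->
  exists u v, u < v /\ [set` `[u, v]] `<=` subsum x @` vanishing_at j l.
Proof.
move=> [t At].
have closed_shifted c : closed (shifted c).
  apply: preimage_closed; last exact/closed_image_subsum/closed_vanishing_at.
  by move=> y _; apply: cvgB; [exact: cvg_id | exact: cvg_cst].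
have [c [y Sy]] : exists c, (shifted c)° !=set0.
  have := interiorS achievement_set_sub_shifted At => /(ex_intro _ t).
  case/(interior_setU_closed (closed_shifted 0)); first by exists 0.
  by case/(interior_setU_closed (closed_shifted _)); [exists (x j) | exists (x j + x j)].
have [u [v [uv uvS]]] := interior_itv_subset (ex_intro _ y Sy).
exists (u - c), (v - c); split; first lra.
move=> s; rewrite /= in_itv /= => /andP[us sv].
have := uvS (s + c); rewrite /shifted /= addrK; apply.
by rewrite in_itv /=; apply/andP; split; lra.
Qed.

Lemma collision_four_representations (e1 e2 : nat -> bool) :
  vanishing_at j l e1 -> vanishing_at j l e2 -> e1 <> e2 ->
  subsum x e1 = subsum x e2 ->
  exists y, achievement_set x y /\
    (exists e1 e2 e3 e4 : nat -> bool,
      [/\ representations x y e1, representations x y e2,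
          representations x y e3 & representations x y e4] /\
      [/\ e1 <> e2, e1 <> e3 & e1 <> e4] /\ [/\ e2 <> e3, e2 <> e4 & e3 <> e4]).
Proof.
move=> [e1j e1l] [e2j e2l] e12 sum12; have lj : l != j by rewrite eq_sym.
exists (subsum x e1 + x j); split; first by exists (setbit e1 j); rewrite subsum_setbit.
exists (setbit e1 j), (setbit e1 l), (setbit e2 j), (setbit e2 l).
split; first by split; rewrite /representations /= subsum_setbit // -?sum12 -?xjl.
split; split; try exact: setbit_neq.
- by move/setbit_inj => /(_ e1j e2j).
- by move/setbit_inj => /(_ e1l e2l).
Qed.

End equal_terms.

End subsum.

Theorem proposition2p2 (R : realType) (x : R^nat)
  (xpos : forall n, 0 < x n)
  (xsum : cvgn (series x))
  (xnoninc : forall n, x n.+1 <= x n)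
  (notcantor : ~ is_cantor_set (achievement_set x))
  (notfinite : ~ finite_set (achievement_set x))
  (k : nat) (hk : x k = x k.+1) :
  exists y, achievement_set x y /\
    (exists e1 e2 e3 e4 : nat -> bool,
      [/\ representations x y e1, representations x y e2,
          representations x y e3 & representations x y e4] /\
      [/\ e1 <> e2, e1 <> e3 & e1 <> e4] /\ [/\ e2 <> e3, e2 <> e4 & e3 <> e4]).
Proof.
have kk : k != k.+1 by rewrite neq_ltn ltnSn.
have [u [v [uv uvP]]] := itv_subset_subsum_vanishing_at xpos xsum kk hk
  (achievement_set_interior_neq0 xpos xsum notcantor).
have [e1 [e2 [e1P e2P e12 sum12]]] :=
  subsum_collision xpos xsum (@closed_vanishing_at k k.+1) uv uvP.
exact: (collision_four_representations xpos xsum kk hk e1P e2P e12 sum12).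
Qed.
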